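(* Let $(X,Y)$ be a pair of real-valued random variables, and assume there exist disjoint intervals $G$ and $H$ and Borel sets $G'\subseteq G$, $H'\subseteq H$ such that the events $\{X\in G'\}$ and $\{Y\in H'\}$ are almost surely equal and $P(X\in G')>0$. Then there is no integrable random variable $Z$ with $X=E(Z\mid X)$ and $Y=E(Z\mid Y)$. In particular, if $(X,Y)$ takes values in $[0,1]^2$ and satisfies this condition, then $(X,Y)$ is not coherent.
   Context: A pair $(X,Y)$ of random variables with values in $[0,1]$ is coherent if there is an event $A$ with $X=P(A\mid X)$ and $Y=P(A\mid Y)$ (equivalently $X=P(A\mid\mathcal G)$, $Y=P(A\mid\mathcal H)$ for some sub-$\sigma$-fields $\mathcal G,\mathcal H$). *)

From HB Require Import structures.
From mathcomp Require Import all_boot all_order all_algebra.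
From mathcomp Require Import all_classical all_reals all_analysis.
Set Implicit Arguments. Unset Strict Implicit. Unset Printing Implicit Defensive.
Import Order.TTheory GRing.Theory Num.Theory.
Local Open Scope classical_set_scope.
Local Open Scope ring_scope.

(* Conditional expectation is not in the library.  [is_condexp_self P Z W]
   expresses "W = E(Z | W)" (i.e. W is a version of the conditional
   expectation of Z given sigma(W)): W is integrable and, for every Borel
   set B of R, the integrals of W and of Z over the event {W \in B} agree.
   (sigma(W)-measurability of W is automatic once W is measurable.) *)
Definition is_condexp_self (d : measure_display) (T : measurableType d)
  (R : realType) (P : probability T R) (Z W : T -> R) : Prop :=
  P.-integrable setT (EFin \o W) /\
  forall B : set R, measurable B ->
    (\int[P]_(x in W @^-1` B) (W x)%:E = \int[P]_(x in W @^-1` B) (Z x)%:E)%E.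

Definition coherent (d : measure_display) (T : measurableType d)
  (R : realType) (P : probability T R) (X Y : T -> R) : Prop :=
  exists A : set T, measurable A /\
    is_condexp_self P (\1_A) X /\ is_condexp_self P (\1_A) Y.

(** Put A = {X ∈ G'} and B = {Y ∈ H'}; they differ by a null set.  As A
    is X-measurable, X and Z have the same integral over A, and likewise
    Y and Z over B; hence X and Y have the same integral over A ∩ B.  But
    on A ∩ B the value of X lies in G and that of Y in H, and one of the
    disjoint intervals lies entirely to the left of the other, so X - Y
    has a strict sign there.  A function of strict sign with zero integral
    lives on a null set, contradicting P(A ∩ B) = P(A) > 0.  Coherence is
    the special case Z = 1_E. *)

From HB Require Import structures.
From mathcomp Require Import all_boot all_order all_algebra.
From mathcomp Require Import all_classical all_reals all_analysis.
From mathcomp Require Import measurable_realfun.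
Import Order.TTheory GRing.Theory Num.Theory.
Local Open Scope classical_set_scope.
Local Open Scope ring_scope.

Lemma disjoint_itv_lt (R : realDomainType) (G H : interval R) (x y x' y' : R) :
  [set` G] `&` [set` H] = set0 ->
  x \in G -> y \in H -> x' \in G -> y' \in H -> x < y -> x' < y'.
Proof.
move=> GH0 xG yH x'G y'H lt_xy; rewrite ltNge; apply/negP => le_y'x'.
have [le_yx'|lt_x'y] := leP y x'.
- have yG : y \in G by apply: (interval_is_interval xG x'G); rewrite (ltW lt_xy).
  by have : ([set` G] `&` [set` H]) y by []; rewrite GH0.
- have x'H : x' \in H by apply: (interval_is_interval y'H yH); rewrite le_y'x' ltW.
  by have : ([set` G] `&` [set` H]) x' by []; rewrite GH0.
Qed.

Section integral_sign.
Context {d : measure_display} {T : measurableType d} {R : realType}.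
Variable mu : {measure set T -> \bar R}.
Local Open Scope ereal_scope.

Lemma integral_setI_negligibleD (A B : set T) (f : T -> \bar R) :
  measurable A -> measurable B -> mu (A `\` B) = 0 -> mu.-integrable A f ->
  \int[mu]_(x in A) f x = \int[mu]_(x in A `&` B) f x.
Proof.
move=> mA mB AB0 iAf.
by rewrite (negligible_integral (measurableD mA mB) mA iAf AB0) setDD.
Qed.

Lemma eq_integral_lt_measure0 (C : set T) (U V : T -> R) :
  measurable C ->
  mu.-integrable C (EFin \o U) -> mu.-integrable C (EFin \o V) ->
  \int[mu]_(x in C) (U x)%:E = \int[mu]_(x in C) (V x)%:E ->
  (forall x, C x -> (U x < V x)%R) -> mu C = 0.
Proof.
move=> mC iU iV eqUV ltUV.
pose f : T -> \bar R := fun x => (V x)%:E - (U x)%:E.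
have mf : measurable_fun C f.
  by apply: emeasurable_funB; [exact: measurable_int iV|exact: measurable_int iU].
have int_abs_f : \int[mu]_(x in C) `|f x| = 0.
  rewrite (eq_integral f) => [|x /[!inE] Cx]; last first.
    by rewrite /f gee0_abs // -EFinB lee_fin subr_ge0 ltW ?ltUV.
  by rewrite /f integralB // eqUV subee // integrable_fin_num.
have [N [mN N0 sN]] := (ae_eq_integral_abs mu mC mf).1 int_abs_f.
apply: subset_measure0 mC mN _ N0 => x Cx; apply: sN => /= /(_ Cx) /eqP.
rewrite /f -EFinB eqe subr_eq0 => /eqP eqVU.
by move: (ltUV x Cx); rewrite eqVU ltxx.
Qed.

Lemma disjoint_itv_eq_integral_measure0 {C : set T} {U V : T -> R}
    {G H : interval R} :
  [set` G] `&` [set` H] = set0 -> measurable C ->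
  mu.-integrable C (EFin \o U) -> mu.-integrable C (EFin \o V) ->
  \int[mu]_(x in C) (U x)%:E = \int[mu]_(x in C) (V x)%:E ->
  (forall x, C x -> U x \in G /\ V x \in H) -> mu C = 0.
Proof.
move=> GH0 mC iU iV eqUV UGVH.
have [->|/set0P[x0 Cx0]] := eqVneq C set0; first exact: measure0.
have [Ux0G Vx0H] := UGVH x0 Cx0.
have [lt_UV0|lt_VU0|eq_UV0] := ltgtP (U x0) (V x0).
- apply: eq_integral_lt_measure0 eqUV _ => // x /UGVH[UxG VxH].
  exact: disjoint_itv_lt GH0 Ux0G Vx0H UxG VxH lt_UV0.
- apply: eq_integral_lt_measure0 (esym eqUV) _ => // x /UGVH[UxG VxH].
  by apply: disjoint_itv_lt Vx0H Ux0G VxH UxG lt_VU0; rewrite setIC.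
- have : ([set` G] `&` [set` H]) (U x0) by split; rewrite //= eq_UV0.
  by rewrite GH0.
Qed.

End integral_sign.

Lemma condexp_self_integral_setI {d : measure_display} {T : measurableType d}
    {R : realType} {P : probability T R} {Z W : T -> R} {D : set R} {B : set T} :
  measurable_fun setT W -> P.-integrable setT (EFin \o Z) ->
  is_condexp_self P Z W -> measurable D -> measurable B ->
  P (W @^-1` D `\` B) = 0%E ->
  (\int[P]_(x in W @^-1` D `&` B) (W x)%:E =
   \int[P]_(x in W @^-1` D `&` B) (Z x)%:E)%E.
Proof.
move=> mW iZ [iW condW] mD mB WDB0.
have mWD : measurable (W @^-1` D) by rewrite -[_ @^-1` _]setTI; exact: mW.
rewrite -!integral_setI_negligibleD //; first exact: condW.
- exact: integrableS iZ.
- exact: integrableS iW.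
Qed.

Theorem proposition2p1 (d : measure_display) (T : measurableType d)
  (R : realType) (P : probability T R) (X Y : T -> R)
  (mX : measurable_fun setT X) (mY : measurable_fun setT Y)
  (G H : interval R) (G' H' : set R) :
  [set` G] `&` [set` H] = set0 ->
  measurable G' -> measurable H' ->
  G' `<=` [set` G] -> H' `<=` [set` H] ->
  P ((X @^-1` G' `\` Y @^-1` H') `|` (Y @^-1` H' `\` X @^-1` G')) = 0%E ->
  (0 < P (X @^-1` G'))%E ->
  (~ exists Z : T -> R, P.-integrable setT (EFin \o Z) /\
       is_condexp_self P Z X /\ is_condexp_self P Z Y) /\
  ((forall t, 0 <= X t <= 1 /\ 0 <= Y t <= 1) -> ~ coherent P X Y).
Proof.
move=> GH0 mG' mH' G'G H'H AB0 PA.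
set A := X @^-1` G'; set B := Y @^-1` H'.
have mA : measurable A by rewrite -[A]setTI; exact: mX.
have mB : measurable B by rewrite -[B]setTI; exact: mY.
have mAB : measurable (A `&` B) := measurableI _ _ mA mB.
have mAdB := measurableU _ _ (measurableD mA mB) (measurableD mB mA).
have AB0' := subset_measure0 (measurableD mA mB) mAdB (@subsetUl _ _ _) AB0.
have BA0' := subset_measure0 (measurableD mB mA) mAdB (@subsetUr _ _ _) AB0.
have PAB : (0 < P (A `&` B))%E by rewrite (measureDI P mA mB) AB0' add0e in PA.
have no_condexp : ~ exists Z : T -> R, P.-integrable setT (EFin \o Z) /\
    is_condexp_self P Z X /\ is_condexp_self P Z Y.
  move=> [Z [iZ [cX cY]]].
  have eqXY : (\int[P]_(x in A `&` B) (X x)%:E =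
               \int[P]_(x in A `&` B) (Y x)%:E)%E.
    rewrite (condexp_self_integral_setI mX iZ cX mG' mB AB0') setIC.
    by rewrite (condexp_self_integral_setI mY iZ cY mH' mA BA0').
  suff PAB0 : P (A `&` B) = 0%E by rewrite PAB0 ltxx in PAB.
  apply: (disjoint_itv_eq_integral_measure0 P GH0 mAB _ _ eqXY).
  - exact: integrableS measurableT mAB (@subsetT _ _) (proj1 cX).
  - exact: integrableS measurableT mAB (@subsetT _ _) (proj1 cY).
  - by move=> x [Ax Bx]; split; [exact: G'G|exact: H'H].
split=> // _ [E [mE [cX cY]]]; apply: no_condexp.
by exists (\1_E); split=> //; exact: integrable_indic.
Qed.
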